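(* Let $\mathcal A$ be a biflat Banach algebra with a left approximate identity, and suppose that for every closed two-sided ideal $I$ of $\mathcal A$, $\mathcal A\hat\otimes_\pi\cdot$ respects $I$ into $\mathcal A\hat\otimes_\pi\mathcal A$ isomorphically. Then $\mathcal A$ is ideally amenable.
   Context: $\mathcal A\hat\otimes_\pi\mathcal A$ is the projective tensor product, a Banach $\mathcal A$-bimodule via $a\cdot(b\otimes c)=ab\otimes c$, $(b\otimes c)\cdot a=b\otimes ca$; $\Delta:\mathcal A\hat\otimes_\pi\mathcal A\to\mathcal A$, $a\otimes b\mapsto ab$. $\mathcal A$ is biflat if $\Delta^*:\mathcal A^*\to(\mathcal A\hat\otimes_\pi\mathcal A)^*$ has a bounded left inverse which is an $\mathcal A$-bimodule homomorphism (duals carry $\langle x,a\cdot f\rangle=\langle x\cdot a,f\rangle$, $\langle x,f\cdot a\rangle=\langle a\cdot x,f\rangle$). ''$\mathcal A\hat\otimes_\pi\cdot$ respects $I$ into $\mathcal A\hat\otimes_\pi\mathcal A$ isomorphically'' means there is $\lambda\ge1$ with $\pi(z;\mathcal A,I)\le\lambda\,\pi(z;\mathcal A,\mathcal A)$ for all $z\in\mathcal A\otimes I$, $\pi(z;E,F)$ being the projective norm in $E\hat\otimes_\pi F$. $\mathcal A$ is ideally amenable if for every closed two-sided ideal $I$, every derivation $D:\mathcal A\to I^*$ (continuous linear, $D(ab)=a\cdot D(b)+D(a)\cdot b$) is of the form $D(a)=a\cdot f-f\cdot a$ with $f\in I^*$. *)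

From mathcomp Require Import all_boot all_order all_algebra.
From mathcomp Require Import all_classical all_reals all_analysis.
From mathcomp Require Export complex.
Import Order.TTheory GRing.Theory Num.Theory.
Import numFieldNormedType.Exports.
Set Implicit Arguments. Unset Strict Implicit. Unset Printing Implicit Defensive.
Local Open Scope ring_scope.
Local Open Scope classical_set_scope.

Section BanachAlg.
Context {K : numFieldType} {V : normedModType K}.

(* [mul] makes V a (not necessarily unital) normed algebra over K;
   together with completeness of V this is a Banach algebra. *)
Definition banach_algebra_mul (mul : V -> V -> V) : Prop :=
  ((forall a b c, mul (mul a b) c = mul a (mul b c)) /\
     (forall a b c, mul (a + b) c = mul a c + mul b c) /\
     (forall a b c, mul a (b + c) = mul a b + mul a c) /\
     (forall (k : K) a b, mul (k *: a) b = k *: mul a b) /\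
     (forall (k : K) a b, mul a (k *: b) = k *: mul a b) /\
     (forall a b, `|mul a b| <= `|a| * `|b|)).

Definition has_left_approx_identity (mul : V -> V -> V) : Prop :=
  exists (D : Type) (le : D -> D -> Prop) (e : D -> V),
    ((exists d : D, True) /\
     (forall d, le d d) /\
     (forall x y z, le x y -> le y z -> le x z) /\
     (forall x y, exists z, le x z /\ le y z) /\
     (forall a (eps : K), 0 < eps ->
           exists d0, forall d, le d0 d -> `|mul (e d) a - a| < eps)).

Definition closed_ideal (mul : V -> V -> V) (I : set V) : Prop :=
  (closed I /\
     I 0 /\
     (forall x y, I x -> I y -> I (x + y)) /\
     (forall (k : K) x, I x -> I (k *: x)) /\
     (forall a x, I x -> I (mul a x) /\ I (mul x a))).

(* f restricted to the subspace I is a bounded linear functional,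
   i.e. f represents an element of I^* (values outside I are irrelevant). *)
Definition bdd_functional_on (I : set V) (f : V -> K) : Prop :=
  ((forall x y, I x -> I y -> f (x + y) = f x + f y) /\
     (forall (k : K) x, I x -> f (k *: x) = k * f x) /\
     (exists C : K, forall x, I x -> `|f x| <= C * `|x|)).

Definition bilinear_form (F : V -> V -> K) : Prop :=
  ((forall a b c, F (a + b) c = F a c + F b c) /\
     (forall a b c, F a (b + c) = F a b + F a c) /\
     (forall (k : K) a b, F (k *: a) b = k * F a b) /\
     (forall (k : K) a b, F a (k *: b) = k * F a b)).

(* bounded bilinear forms on V x V: these are exactly the elements of the
   dual (V \hat\otimes_\pi V)^*, via <a (x) b, F> = F a b. *)
Definition bdd_bilinear (F : V -> V -> K) : Prop :=
  bilinear_form F /\ exists M : K, forall a b, `|F a b| <= M * `|a| * `|b|.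

(* Biflatness: Delta^* : A^* -> (A \hat\otimes A)^*, (Delta^* phi)(a,b) = phi(ab),
   has a bounded left inverse rho which is an A-bimodule homomorphism.
   Module actions: (c.F)(x,y) = F(x, yc), (F.c)(x,y) = F(cx, y) on (A(x)A)^*,
   (c.phi)(x) = phi(xc), (phi.c)(x) = phi(cx) on A^*. *)
Definition biflat (mul : V -> V -> V) : Prop :=
  exists rho : (V -> V -> K) -> (V -> K),
    ((forall F, bdd_bilinear F -> bdd_functional_on setT (rho F)) /\
     (forall F G, bdd_bilinear F -> bdd_bilinear G -> forall a,
            rho (fun x y => F x y + G x y) a = rho F a + rho G a) /\
     (forall (k : K) F, bdd_bilinear F -> forall a,
            rho (fun x y => k * F x y) a = k * rho F a) /\
     (exists C : K, forall F (M : K), bdd_bilinear F ->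
            (forall x y, `|F x y| <= M * `|x| * `|y|) ->
            forall a, `|rho F a| <= C * M * `|a|) /\
     (forall c F, bdd_bilinear F -> forall a,
            rho (fun x y => F x (mul y c)) a = rho F (mul a c)) /\
     (forall c F, bdd_bilinear F -> forall a,
            rho (fun x y => F (mul c x) y) a = rho F (mul c a)) /\
     (forall phi, bdd_functional_on setT phi -> forall a,
            rho (fun x y => phi (mul x y)) a = phi a)).

(* Finite representations sum_i a_i (x) b_i of elements of the algebraic
   tensor product V (x) V; two lists represent the same tensor iff every
   bilinear form takes the same value on them. *)
Definition tensor_eq (s t : seq (V * V)) : Prop :=
  forall F, bilinear_form F ->
    \sum_(p <- s) F p.1 p.2 = \sum_(p <- t) F p.1 p.2.

Definition rep_cost (s : seq (V * V)) : K := \sum_(p <- s) `|p.1| * `|p.2|.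

(* the set whose infimum is the projective norm pi(z; A, P) of the tensor z
   represented by s, when the right factors are taken in P *)
Definition pi_costs (P : set V) (s : seq (V * V)) : set K :=
  [set c | exists t : seq (V * V),
     ((forall p, p \in t -> P p.2) /\
     tensor_eq t s /\
     c = rep_cost t)].

(* A \hat\otimes_\pi . respects I into A \hat\otimes_\pi A isomorphically:
   exists lam >= 1, pi(z;A,I) <= lam pi(z;A,A) for all z in A (x) I.
   The inequality between infima is unfolded:
   inf X <= lam inf Y  <->  forall y in Y, eps > 0, exists x in X, x <= lam y + eps. *)
Definition respects_isomorphically (I : set V) : Prop :=
  exists lam : K, 1 <= lam /\
    forall s : seq (V * V), (forall p, p \in s -> I p.2) ->
    forall y, pi_costs setT s y -> forall eps : K, 0 < eps ->
    exists x, pi_costs I s x /\ x <= lam * y + eps.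

(* D : A -> I^*, represented as D a x for a in A, x in I, is a continuous
   derivation; module actions (a.f)(x) = f(xa), (f.a)(x) = f(ax). *)
Definition derivation_into_dual (mul : V -> V -> V) (I : set V)
    (D : V -> V -> K) : Prop :=
  ((forall a, bdd_functional_on I (D a)) /\
     (forall a b x, I x -> D (a + b) x = D a x + D b x) /\
     (forall (k : K) a x, I x -> D (k *: a) x = k * D a x) /\
     (exists C : K, forall a x, I x -> `|D a x| <= C * `|a| * `|x|) /\
     (forall a b x, I x -> D (mul a b) x = D b (mul x a) + D a (mul b x))).

Definition inner_into_dual (mul : V -> V -> V) (I : set V)
    (D : V -> V -> K) : Prop :=
  exists f : V -> K, bdd_functional_on I f /\
    forall a x, I x -> D a x = f (mul x a) - f (mul a x).

Definition ideally_amenable (mul : V -> V -> V) : Prop :=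
  forall I : set V, closed_ideal mul I ->
  forall D : V -> V -> K, derivation_into_dual mul I D -> inner_into_dual mul I D.

End BanachAlg.

From mathcomp Require Import all_boot all_order all_algebra.
From mathcomp Require Import all_classical all_reals all_analysis.
From mathcomp Require Import complex ring lra.
Import numFieldNormedType.Exports.
Import Order.TTheory GRing.Theory Num.Theory.
Set Implicit Arguments. Unset Strict Implicit. Unset Printing Implicit Defensive.
Local Open Scope ring_scope.
Local Open Scope classical_set_scope.

(** A derivation D : A -> I^* is a bilinear form on A x I.  As pi(.; A, I) and
    pi(.; A, A) are equivalent on A (x) I, D is bounded on the subspace A (x) I of
    A \hat(x) A, and Hahn-Banach extends it to a bounded bilinear form F on A x A.
    The tensor product is only present through finite representations, so the
    extension is built by Zorn's lemma on graphs of real functionals on pairs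
    (u, v), homogeneous in v and dominated by the cost of every representation,
    and is then complexified.
    Let rho be the bimodule left inverse of Delta^* and H_a(u, v) = F(au, v) -
    F(u, va).  For x in I the derivation rule gives H_a(u, vx) = D_a(uvx), i.e.
    H_a.x = Delta^*(D_a(. x)), so rho(H_a)(yx) = D_a(yx); letting y run through
    the left approximate identity, D_a(x) = rho(H_a)(x) = f(xa) - f(ax) with
    f = -rho(F). *)

Lemma ex_maximal_superset (T : Type) (P : set (set T)) (A0 : set T) :
  P A0 ->
  (forall F, F `<=` P -> total_on F subset -> F !=set0 ->
     P (\bigcup_(X in F) X)) ->
  exists A, [/\ P A, A0 `<=` A & forall B, A `<` B -> ~ P B].
Proof.
move=> PA0 Pchain.
have [|A [PA Amax]] := @Zorn_bigcup T (fun X => P (A0 `|` X)).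
  move=> F FP Ftot; have [[X FX]|F0] := pselect (F !=set0); last first.
    suff -> : F = set0 by rewrite bigcup_set0 setU0.
    by apply/seteqP; split=> // X FX; apply: F0; exists X.
  have -> : A0 `|` \bigcup_(X in F) X = \bigcup_(X in (setU A0) @` F) X.
    rewrite eqEsubset; split=> [x [A0x|[Y FY Yx]]|x [_ [Y FY <-] [A0x|Yx]]].
    - by exists (A0 `|` X); [exists X|left].
    - by exists (A0 `|` Y); [exists Y|right].
    - by left.
    - by right; exists Y.
  apply: Pchain; first by move=> _ [Y FY <-]; exact: FP.
    move=> _ _ [Y FY <-] [Z FZ <-].
    by case: (Ftot _ _ FY FZ) => YZ; [left|right]; exact: setUS.
  by exists (A0 `|` X); exists X.
have A0B B : A0 `|` A `<` B -> A0 `|` B = B.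
  by move=> /properW AB; apply/setUidPr => x A0x; apply: AB; left.
exists (A0 `|` A); split=> // B AB; rewrite -(A0B B AB); apply: Amax.
split; first by move=> x Ax; apply: (properW AB); right.
by move=> BA; case: AB => _; apply; move=> x /BA; right.
Qed.

Lemma chain_bigcup_finite (T : eqType) (F : set (set T)) (s : seq T) :
  total_on F subset -> F !=set0 ->
  (forall p, p \in s -> (\bigcup_(X in F) X) p) ->
  exists2 X, F X & forall p, p \in s -> X p.
Proof.
move=> Ftot [X0 FX0]; elim: s => [|q s IHs] sF; first by exists X0.
have [X FX sX] : exists2 X, F X & forall p, p \in s -> X p.
  by apply: IHs => p ps; apply: sF; rewrite inE ps orbT.
have [Y FY Yq] : (\bigcup_(X in F) X) q by apply: sF; rewrite inE eqxx.
case: (Ftot _ _ FX FY) => [XY|YX].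
- by exists Y => // p; rewrite inE => /orP[/eqP->//|/sX/XY].
- by exists X => // p; rewrite inE => /orP[/eqP->|/sX//]; exact: YX.
Qed.

Definition subspace (K : pzRingType) (V : lmodType K) (S : set V) : Prop :=
  S 0 /\ forall k x y, S x -> S y -> S (k *: x + y).

Section Subspace.
Variables (K : pzRingType) (V : lmodType K) (S : set V).
Hypothesis S_subspace : subspace S.

Lemma subspace0 : S 0. Proof. by case: S_subspace. Qed.

Lemma subspaceZD k x y : S x -> S y -> S (k *: x + y).
Proof. by case: S_subspace => _; apply. Qed.

Lemma subspaceZ k x : S x -> S (k *: x).
Proof. by move=> Sx; rewrite -[_ *: _]addr0; exact: subspaceZD Sx subspace0. Qed.

Lemma subspaceB x y : S x -> S y -> S (x - y).
Proof. by move=> Sx Sy; rewrite addrC -scaleN1r; apply: subspaceZD. Qed.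

End Subspace.

Lemma subspaceT (K : pzRingType) (V : lmodType K) : subspace [set: V].
Proof. by []. Qed.

Lemma closed_ideal_subspace (K : numFieldType) (V : normedModType K)
    (mul : V -> V -> V) (I : set V) :
  closed_ideal mul I -> subspace I.
Proof.
by move=> [_ [I0 [ID [IZ _]]]]; split=> // k x y Ix Iy; apply: ID => //; exact: IZ.
Qed.

Section LinearExtension.
Variables (K : fieldType) (V W : lmodType K).

(* Partial maps are handled through their graphs, so that a chain of
   extensions is bounded by the union of the graphs. *)

Definition linear_graph (G : set (V * W)) : Prop :=
  subspace G /\ forall w, G (0, w) -> w = 0.

Lemma linear_graph_functional G x y1 y2 :
  linear_graph G -> G (x, y1) -> G (x, y2) -> y1 = y2.
Proof.
move=> [G_sub G0] Gxy1 Gxy2; apply/eqP; rewrite eq_sym -subr_eq0; apply/eqP/G0.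
by rewrite -(subrr x); exact: (subspaceB G_sub Gxy2 Gxy1).
Qed.

Section Adjoin.
Variables (G : set (V * W)) (v0 : V).
Hypotheses (G_linear : linear_graph G) (v0_notin : forall y, ~ G (v0, y)).

Definition graph_adjoin : set (V * W) :=
  [set p | exists x y k, G (x, y) /\ p = (x + k *: v0, y)].

Lemma graph_adjoin_linear : linear_graph graph_adjoin.
Proof.
have [G_sub G0] := G_linear.
split; first split.
- by exists 0, 0, 0; split; [exact: (subspace0 G_sub)|rewrite scale0r addr0].
- move=> k _ _ [x1 [y1 [k1 [G1 ->]]]] [x2 [y2 [k2 [G2 ->]]]].
  exists (k *: x1 + x2), (k *: y1 + y2), (k * k1 + k2).
  split; first exact: (subspaceZD G_sub k G1 G2).
  by congr (_, _); rewrite /= scalerDl -scalerA scalerDr addrACA.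
- move=> w [x [y [k [Gxy [x0 ->]]]]].
  have [k0|k0] := eqVneq k 0.
    by apply: G0; move: x0; rewrite k0 scale0r addr0 => ->.
  have kv0 : k *: v0 = - x by apply/eqP; rewrite -addr_eq0 addrC x0.
  have v0E : v0 = - k^-1 *: x by rewrite -(scalerK k0 v0) kv0 scalerN scaleNr.
  case: (@v0_notin (- k^-1 *: y)); rewrite v0E.
  exact: (subspaceZ G_sub _ Gxy).
Qed.

Lemma graph_adjoin_proper : G `<` graph_adjoin.
Proof.
split; first by move=> [x y] Gxy; exists x, y, 0; rewrite scale0r addr0.
move=> /(_ (v0, 0)) Gv0; apply: (@v0_notin 0); apply: Gv0.
by exists 0, 0, 1; split; [exact: (subspace0 G_linear.1)|rewrite scale1r add0r].
Qed.

End Adjoin.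

Theorem linear_extension (S : set V) (T : set W) (f0 : V -> W) :
  subspace S ->
  (forall k x y, S x -> S y -> f0 (k *: x + y) = k *: f0 x + f0 y) ->
  (forall x, S x -> T (f0 x)) ->
  exists f : V -> W, [/\ linear f, forall x, T (f x) & forall x, S x -> f x = f0 x].
Proof.
move=> S_sub f0_lin f0T.
pose Adm G := linear_graph G /\ forall x y, G (x, y) -> T y.
have S0 := subspace0 S_sub.
have f00 : f0 0 = 0.
  have := f0_lin 1 0 0 S0 S0; rewrite scaler0 addr0 scale1r.
  by move/(congr1 (fun z => z - f0 0)); rewrite subrr addrK.
have [||G [[G_lin GT] G0G Gmax]] :=
  @ex_maximal_superset _ Adm [set (x, f0 x) | x in S].
- split; [split; [split|]|].
  + by exists 0; rewrite ?f00.
  + move=> k _ _ [x Sx <-] [y Sy <-]; exists (k *: x + y); first exact: subspaceZD.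
    by rewrite f0_lin.
  + by move=> w [x Sx [x0 <-]]; rewrite x0.
  + by move=> x y [z Sz [_ <-]]; exact: f0T.
- move=> F FAdm Ftot Fne; split; [split; [split|]|].
  + by case: Fne => X FX; exists X => //; exact: (subspace0 (FAdm X FX).1.1).
  + move=> k p q Up Uq.
    have [|X FX Xpq] := @chain_bigcup_finite _ F [:: p; q] Ftot Fne.
      by move=> r; rewrite !inE => /orP[] /eqP ->.
    exists X => //; apply: (subspaceZD (FAdm X FX).1.1); apply: Xpq;
      by rewrite !inE eqxx ?orbT.
  + by move=> w [X FX Xw]; exact: (FAdm X FX).1.2.
  + by move=> x y [X FX Xxy]; have [_ XT] := FAdm X FX; exact: XT Xxy.
have G_dom x : exists y, G (x, y).
  apply/not_existsP => x_notin.
  apply: (Gmax _ (graph_adjoin_proper G_lin x_notin)).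
  split; first exact: graph_adjoin_linear.
  by move=> _ y [z [w [k [Gzw [_ ->]]]]]; exact: GT Gzw.
pose f x := xget 0 [set y | G (x, y)].
have Gf x : G (x, f x) by exact: xgetPex (G_dom x).
exists f; split.
- move=> k x y; apply: (linear_graph_functional G_lin (Gf _)).
  exact: (subspaceZD G_lin.1 k (Gf x) (Gf y)).
- by move=> x; exact: GT (Gf x).
- move=> x Sx; apply: (linear_graph_functional G_lin (Gf x)).
  by apply: G0G; exists x.
Qed.

End LinearExtension.

Corollary ex_linear_projection (K : fieldType) (V : lmodType K) (S : set V) :
  subspace S ->
  exists p : V -> V, [/\ linear p, forall x, S (p x) & forall x, S x -> p x = x].
Proof. by move=> S_sub; apply: linear_extension. Qed.

Lemma ler_addM_gt0 (K : numFieldType) (x y c : K) :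
  0 <= c -> (forall e, 0 < e -> x <= y + c * e) -> x <= y.
Proof.
move=> c0 le_xy; apply/ler_addgt0Pr => e e0.
have c1 : 0 < c + 1 by rewrite ltr_wpDl.
apply: le_trans (le_xy _ (divr_gt0 e0 c1)) _; rewrite lerD2l mulrCA ger_pMr //.
by rewrite ler_pdivrMr // mul1r lerDl.
Qed.

Lemma ler_normlM (K : numDomainType) (a c x : K) :
  0 <= a -> 0 <= x -> a <= c * x -> a <= `|c| * x.
Proof.
move=> a0 x0 le_a; rewrite -[x in `|c| * x](ger0_norm x0) -normrM ger0_norm //.
exact: le_trans le_a.
Qed.

Lemma bdd_functional_onB (K : numFieldType) (V : normedModType K) (S : set V)
    (f : V -> K) x y :
  subspace S -> bdd_functional_on S f -> S x -> S y -> f (x - y) = f x - f y.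
Proof.
move=> S_sub [f_add [f_scale _]] Sx Sy.
by rewrite -scaleN1r f_add ?f_scale ?mulN1r //; exact: subspaceZ.
Qed.

Lemma approx_eq0 (K : numFieldType) (V : normedModType K) (S : set V)
    (h : V -> K) (M : K) x :
  subspace S -> 0 <= M -> S x ->
  (forall y, S y -> h (x - y) = h x - h y) ->
  (forall z, S z -> `|h z| <= M * `|z|) ->
  (forall e, 0 < e -> exists2 y, S y /\ h y = 0 & `|x - y| < e) -> h x = 0.
Proof.
move=> S_sub M0 Sx hB h_bound approx; apply/eqP; rewrite -normr_le0.
apply: (ler_addM_gt0 M0) => e e0; have [y [Sy hy0] xy] := approx e e0.
rewrite add0r -[h x]subr0 -hy0 -hB //.
apply: le_trans (h_bound _ (subspaceB S_sub Sx Sy)) _.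
by apply: ler_wpM2l => //; exact: ltW.
Qed.

Local Open Scope complex_scope.

Section RealNorm.
Variable R : realType.

Definition re_norm (T : normedZmodType R[i]) (x : T) : R := complex.Re `|x|.

Lemma re_normE (T : normedZmodType R[i]) (x : T) : `|x| = (re_norm x)%:C.
Proof.
by rewrite /re_norm [LHS]complexE (ger0_Im (normr_ge0 x)) mulr0 addr0.
Qed.

Lemma re_normZ (V : normedModType R[i]) k (x : V) :
  re_norm (k *: x) = re_norm k * re_norm x.
Proof. by apply: complexI; rewrite -re_normE normrZ !re_normE rmorphM. Qed.

Lemma re_norm_real (r : R) : re_norm r%:C = `|r|.
Proof. by apply: complexI; rewrite -re_normE normc_def /= expr0n addr0 sqrtr_sqr. Qed.


Lemma Re_sum (T : Type) (s : seq T) (f : T -> R[i]) :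
  complex.Re (\sum_(i <- s) f i) = \sum_(i <- s) complex.Re (f i).
Proof.
have ReD (x y : R[i]) : complex.Re (x + y) = complex.Re x + complex.Re y.
  by case: x; case: y.
by elim: s => [|x s IHs]; rewrite ?big_nil // !big_cons ReD IHs.
Qed.

Lemma Re_le_re_norm (z : R[i]) : complex.Re z <= re_norm z.
Proof.
by rewrite -lecR -re_normE; apply: le_trans (normc_ge_Re z); rewrite lecR ler_norm.
Qed.

Lemma Re_realM (r : R) (z : R[i]) : complex.Re (r%:C * z) = r * complex.Re z.
Proof. by case: z => a b; simpc. Qed.

End RealNorm.

Section Tensor.
Variables (R : realType) (V : normedModType R[i]).
Implicit Types (s t : seq (V * V)) (F : V -> V -> R[i]).

Definition rcost t : R := \sum_(p <- t) re_norm p.1 * re_norm p.2.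

Lemma rep_costE t : rep_cost t = (rcost t)%:C.
Proof.
by rewrite /rep_cost rmorph_sum; apply: eq_bigr => p _; rewrite !re_normE rmorphM.
Qed.

Lemma rcost_cat s t : rcost (s ++ t) = rcost s + rcost t.
Proof. exact: big_cat. Qed.

Definition scale_right k t := [seq (p.1, k *: p.2) | p <- t].

Lemma rcost_scale_right k t : rcost (scale_right k t) = re_norm k * rcost t.
Proof.
rewrite /rcost big_map mulr_sumr; apply: eq_bigr => p _ /=.
by rewrite re_normZ mulrCA.
Qed.

Lemma bilinear0r F u : bilinear_form F -> F u 0 = 0.
Proof. by move=> [_ [_ [_ FZr]]]; rewrite -(scale0r 0) FZr mul0r. Qed.

Lemma bilinearNr F u v : bilinear_form F -> F u (- v) = - F u v.
Proof. by move=> [_ [_ [_ FZr]]]; rewrite -scaleN1r FZr mulN1r. Qed.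

Lemma bilinear_sum_scale_right F k t : bilinear_form F ->
  \sum_(p <- scale_right k t) F p.1 p.2 = k * \sum_(p <- t) F p.1 p.2.
Proof.
move=> [_ [_ [_ FZr]]]; rewrite big_map mulr_sumr.
by apply: eq_bigr => p _; rewrite FZr.
Qed.

Lemma tensor_eq_sym s t : tensor_eq s t -> tensor_eq t s.
Proof. by move=> st F bF; rewrite st. Qed.

Lemma tensor_eq_trans s t u : tensor_eq s t -> tensor_eq t u -> tensor_eq s u.
Proof. by move=> st tu F bF; rewrite st // tu. Qed.

Lemma tensor_eq_scale_right k s t :
  tensor_eq s t -> tensor_eq (scale_right k s) (scale_right k t).
Proof. by move=> st F bF; rewrite !bilinear_sum_scale_right // st. Qed.

End Tensor.

Section DominatedExtension.
Variables (R : realType) (V : normedModType R[i]) (M : R).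
Local Notation point := ((V * V) * R)%type.
Implicit Types (G : set point) (s : seq point) (t : seq (V * V)).

Definition homogeneous_graph G :=
  forall u v y (r : R), G ((u, v), y) -> G ((u, r%:C *: v), r * y).

Definition dominated_graph G := forall s, (forall p, p \in s -> G p) ->
  forall t, tensor_eq (map fst s) t -> \sum_(p <- s) p.2 <= M * rcost t.

Lemma dominated_graph_functional G u v y1 y2 :
  homogeneous_graph G -> dominated_graph G ->
  G ((u, v), y1) -> G ((u, v), y2) -> y1 = y2.
Proof.
move=> G_hom G_dom.
suff le_y y y' : G ((u, v), y) -> G ((u, v), y') -> y <= y'.
  by move=> G1 G2; apply/eqP; rewrite eq_le !le_y.
move=> Gy Gy'.
have : \sum_(p <- [:: ((u, v), y); ((u, (-1)%:C *: v), -1 * y')]) p.2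
         <= M * rcost (Nil (V * V)).
  apply: G_dom => [p|F bF]; first by rewrite !inE => /orP[] /eqP ->; [|exact: G_hom].
  have [_ [_ [_ FZr]]] := bF.
  by rewrite /= !big_cons !big_nil FZr rmorphN1 mulN1r addr0 subrr.
by rewrite !big_cons big_nil /rcost big_nil mulr0 addr0 mulN1r subr_le0.
Qed.

Section Adjoin.
Variables (G : set point) (u0 v0 : V).
Hypotheses (G_hom : homogeneous_graph G) (G_dom : dominated_graph G).

Definition adjoin_rel (q : R) s t := (forall p, p \in s -> G p) /\
  tensor_eq (map fst s ++ [:: (u0, q%:C *: v0)]) t.

Lemma adjoin_rel_separated s1 t1 s2 t2 :
  adjoin_rel (-1) s1 t1 -> adjoin_rel 1 s2 t2 ->
  \sum_(p <- s1) p.2 - M * rcost t1 <= M * rcost t2 - \sum_(p <- s2) p.2.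
Proof.
move=> [s1G e1] [s2G e2].
have : \sum_(p <- s1 ++ s2) p.2 <= M * rcost (t1 ++ t2).
  apply: (G_dom (s := s1 ++ s2)) => [p|F bF]; first by rewrite mem_cat => /orP[/s1G|/s2G].
  rewrite map_cat !big_cat -(e1 F bF) -(e2 F bF) !big_cat !big_seq1 /=.
  have [_ [_ [_ FZr]]] := bF; rewrite !FZr rmorphN1 rmorph1; ring.
by rewrite big_cat /= rcost_cat mulrDr; lra.
Qed.

Let lower := [set x : R | exists s t,
  adjoin_rel (-1) s t /\ x = \sum_(p <- s) p.2 - M * rcost t].

(* Representations of u0 (x) (-v0), resp. u0 (x) v0, bound the value at
   (u0, v0) from below, resp. above, and lower bounds never exceed upper ones. *)
Definition adjoin_value : R := sup lower.

Let lower_has_sup : has_sup lower.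
Proof.
have rel0 q : adjoin_rel q [::] [:: (u0, q%:C *: v0)] by [].
split; first by eexists; exists [::], [:: (u0, (-1)%:C *: v0)].
exists (M * rcost [:: (u0, 1%:C *: v0)] - \sum_(p <- Nil point) p.2) => _ [s [t [rel ->]]].
exact: adjoin_rel_separated rel (rel0 1).
Qed.

Lemma adjoin_value_ge s t :
  adjoin_rel (-1) s t -> \sum_(p <- s) p.2 - M * rcost t <= adjoin_value.
Proof. by move=> rel; apply: sup_upper_bound => //; exists s, t. Qed.

Lemma adjoin_value_le s t :
  adjoin_rel 1 s t -> adjoin_value <= M * rcost t - \sum_(p <- s) p.2.
Proof.
move=> rel; apply: ge_sup; first by case: lower_has_sup.
by move=> _ [s' [t' [rel' ->]]]; exact: adjoin_rel_separated rel' rel.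
Qed.

Definition scale_points (r : R) s :=
  [seq ((p.1.1, r%:C *: p.1.2), r * p.2) | p <- s].

Lemma adjoin_rel_scale (r q q' : R) s t : q' = r * q -> adjoin_rel q s t ->
  adjoin_rel q' (scale_points r s) (scale_right r%:C t).
Proof.
move=> -> [sG e]; split.
  by move=> _ /mapP[p /sG Gp ->]; case: p Gp => -[] *; exact: G_hom.
have -> : map fst (scale_points r s) ++ [:: (u0, (r * q)%:C *: v0)] =
          scale_right r%:C (map fst s ++ [:: (u0, q%:C *: v0)]).
  by rewrite /scale_right map_cat -!map_comp rmorphM -scalerA.
exact: tensor_eq_scale_right.
Qed.

Lemma sum_scale_points r s :
  \sum_(p <- scale_points r s) p.2 = r * \sum_(p <- s) p.2.
Proof. by rewrite big_map mulr_sumr. Qed.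

Lemma adjoin_bound q s t :
  adjoin_rel q s t -> \sum_(p <- s) p.2 + q * adjoin_value <= M * rcost t.
Proof.
(* for q <> 0, rescale by |q|^-1 to reach the relations defining adjoin_value *)
have [q_lt0|q_gt0|->] := ltrgtP q 0 => rel.
- have q0 : q != 0 := ltr0_neq0 q_lt0.
  have := adjoin_value_ge (adjoin_rel_scale (r := - q^-1) _ rel).
  rewrite mulNr mulVf // => /(_ erefl).
  rewrite sum_scale_points rcost_scale_right re_norm_real gtr0_norm ?oppr_gt0 ?invr_lt0 //.
  have nq_gt0 : 0 < - q by rewrite oppr_gt0.
  set S := \sum_(p <- s) p.2; set T := rcost t.
  move=> /(ler_wpM2l (ltW nq_gt0)).
  have -> : - q * (- q^-1 * S - M * (- q^-1 * T)) = S - M * T by field.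
  by rewrite mulNr; lra.
- have q0 : q != 0 := lt0r_neq0 q_gt0.
  have := adjoin_value_le (adjoin_rel_scale (r := q^-1) _ rel).
  rewrite mulVf // => /(_ erefl).
  rewrite sum_scale_points rcost_scale_right re_norm_real gtr0_norm ?invr_gt0 //.
  set S := \sum_(p <- s) p.2; set T := rcost t.
  move=> /(ler_wpM2l (ltW q_gt0)).
  have -> : q * (M * (q^-1 * T) - q^-1 * S) = M * T - S by field.
  lra.
- rewrite mul0r addr0; apply: G_dom rel.1 _ _ => F bF; rewrite -rel.2 //.
  by rewrite big_cat big_seq1 /= rmorph0 scale0r bilinear0r // addr0.
Qed.

Definition ray_adjoin : set point :=
  G `|` [set ((u0, r%:C *: v0), r * adjoin_value) | r in [set: R]].

Lemma ray_adjoin_homogeneous : homogeneous_graph ray_adjoin.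
Proof.
move=> u v y r [Gp|[r' _ [<- <- <-]]]; first by left; exact: G_hom.
by right; exists (r * r') => //; rewrite rmorphM scalerA mulrA.
Qed.

Lemma ray_adjoin_decomp s : (forall p, p \in s -> ray_adjoin p) ->
  exists s' q, adjoin_rel q s' (map fst s) /\
    \sum_(p <- s) p.2 = \sum_(p <- s') p.2 + q * adjoin_value.
Proof.
elim: s => [_|p s IHs sR].
  exists [::], 0; split; last by rewrite !big_nil mul0r addr0.
  by split=> // F bF; rewrite big_seq1 /= rmorph0 scale0r bilinear0r // big_nil.
have [|s' [q [[s'G e] sum_s]]] := IHs; first by move=> p' ps; apply: sR; rewrite inE ps orbT.
case: (sR p (mem_head _ _)) => [Gp|[r _ <-]].
- exists (p :: s'), q; split; last by rewrite !big_cons sum_s addrA.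
  split=> [p'|F bF]; first by rewrite inE => /orP[/eqP ->|/s'G].
  by rewrite /= !big_cons e.
- exists s', (r + q); split; last by rewrite big_cons sum_s /=; ring.
  split=> // F bF; rewrite /= big_cons -(e F bF) !big_cat !big_seq1 /=.
  have [_ [_ [_ FZr]]] := bF; rewrite !FZr rmorphD; ring.
Qed.

Lemma ray_adjoin_dominated : dominated_graph ray_adjoin.
Proof.
move=> s sR t e; have [s' [q [[s'G e'] ->]]] := ray_adjoin_decomp sR.
by apply: adjoin_bound; split=> //; exact: tensor_eq_trans e' e.
Qed.

Lemma ray_adjoin_proper : (forall y, ~ G ((u0, v0), y)) -> G `<` ray_adjoin.
Proof.
move=> v0_notin; split; first exact: subsetUl.
have ray1 : ray_adjoin ((u0, 1%:C *: v0), 1 * adjoin_value) by right; exists 1.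
by move=> /(_ _ ray1); rewrite rmorph1 scale1r; exact: v0_notin.
Qed.

End Adjoin.

Theorem dominated_extension (G0 : set point) :
  homogeneous_graph G0 -> dominated_graph G0 ->
  exists g : V * V -> R, [/\ forall p y, G0 (p, y) -> g p = y,
    forall u v (r : R), g (u, r%:C *: v) = r * g (u, v) &
    forall t t', tensor_eq t t' -> \sum_(p <- t) g p <= M * rcost t'].
Proof.
move=> G0_hom G0_dom.
pose Adm G := homogeneous_graph G /\ dominated_graph G.
have [||G [[G_hom G_dom] G0G Gmax]] := @ex_maximal_superset _ Adm G0.
- by [].
- move=> F FAdm Ftot Fne; split.
    by move=> u v y r [X FX Xp]; exists X => //; exact: (FAdm X FX).1.
  move=> s sU t st; have [X FX Xs] := chain_bigcup_finite Ftot Fne sU.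
  exact: (FAdm X FX).2.
have G_total p : exists y, G (p, y).
  case: p => u v; apply/not_existsP => notin.
  apply: (Gmax _ (ray_adjoin_proper notin)).
  by split; [exact: ray_adjoin_homogeneous|exact: ray_adjoin_dominated].
pose g p := xget 0 [set y | G (p, y)].
have Gg p : G (p, g p) by exact: xgetPex (G_total p).
have g_unique p y : G (p, y) -> g p = y.
  by case: p Gg => u v Gg; exact: dominated_graph_functional G_hom G_dom (Gg _).
exists g; split.
- by move=> p y /G0G; exact: g_unique.
- by move=> u v r; apply: g_unique; exact: G_hom (Gg _).
- move=> t t' tt'; have := G_dom [seq (p, g p) | p <- t] _ t'.
  rewrite big_map -map_comp map_id; apply=> // _ /mapP[p _ ->]; exact: Gg.
Qed.

End DominatedExtension.

Section Complexify.
Variables (R : realType) (V : normedModType R[i]) (M : R) (g : V * V -> R).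
Hypotheses (g_hom : forall u v (r : R), g (u, r%:C *: v) = r * g (u, v))
  (g_dom : forall t t', tensor_eq t t' -> \sum_(p <- t) g p <= M * rcost t').

Lemma g_oppr u v : g (u, - v) = - g (u, v).
Proof.
have -> : - v = (-1)%:C *: v by rewrite rmorphN1 scaleN1r.
by rewrite g_hom mulN1r.
Qed.

Lemma sum_g_eq0 t : tensor_eq t [::] -> \sum_(p <- t) g p = 0.
Proof.
have dom0 s : tensor_eq s [::] -> \sum_(p <- s) g p <= 0.
  by move=> s0; have := g_dom s0; rewrite /rcost big_nil mulr0.
move=> t0; apply/eqP; rewrite eq_le dom0 //= -oppr_le0 -sumrN.
have := dom0 (scale_right (-1)%:C t) (tensor_eq_scale_right _ t0).
rewrite big_map rmorphN1.
by under eq_bigr => p _ do rewrite scaleN1r g_oppr -surjective_pairing.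
Qed.

Lemma g_addl u1 u2 v : g (u1 + u2, v) = g (u1, v) + g (u2, v).
Proof.
have : \sum_(p <- [:: (u1 + u2, v); (u1, - v); (u2, - v)]) g p = 0.
  apply: sum_g_eq0 => F bF; rewrite !big_cons big_nil /= !bilinearNr // addr0.
  by have [-> _] := bF; rewrite -opprD subrr.
by rewrite !big_cons big_nil /= !g_oppr addr0 -opprD => /eqP; rewrite subr_eq0 => /eqP.
Qed.

Lemma g_addr u v1 v2 : g (u, v1 + v2) = g (u, v1) + g (u, v2).
Proof.
have : \sum_(p <- [:: (u, v1 + v2); (u, - v1); (u, - v2)]) g p = 0.
  apply: sum_g_eq0 => F bF; rewrite !big_cons big_nil /= !bilinearNr // addr0.
  by have [_ [-> _]] := bF; rewrite -opprD subrr.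
by rewrite !big_cons big_nil /= !g_oppr addr0 -opprD => /eqP; rewrite subr_eq0 => /eqP.
Qed.

Lemma g_balanced k u v : g (k *: u, v) = g (u, k *: v).
Proof.
have : \sum_(p <- [:: (k *: u, v); (u, - (k *: v))]) g p = 0.
  apply: sum_g_eq0 => F bF; rewrite !big_cons big_nil /= bilinearNr // addr0.
  by have [_ [_ [-> ->]]] := bF; rewrite subrr.
by rewrite !big_cons big_nil /= g_oppr addr0 => /eqP; rewrite subr_eq0 => /eqP.
Qed.

Lemma g_scaler k u v :
  g (u, k *: v) = complex.Re k * g (u, v) + complex.Im k * g (u, 'i *: v).
Proof.
rewrite {1}(complexE k) scalerDl g_addr g_hom.
have -> : ('i * (complex.Im k)%:C) *: v = (complex.Im k)%:C *: ('i *: v).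
  by rewrite scalerA mulrC.
by rewrite g_hom.
Qed.

Definition complexify (u v : V) : R[i] :=
  (g (u, v))%:C - 'i * (g (u, 'i *: v))%:C.

Lemma complexify_scaler k u v : complexify u (k *: v) = k * complexify u v.
Proof.
rewrite /complexify scalerA g_scaler [g (u, ('i * k) *: v)]g_scaler.
case: k => a b /=; simpc; apply/eqP; rewrite eq_complex /=; apply/andP; split; apply/eqP; ring.
Qed.

Lemma complexify_bdd : bdd_bilinear complexify.
Proof.
split.
  split=> [a b c|]; first by rewrite /complexify !g_addl !rmorphD addrACA -opprD -mulrDr.
  split=> [a b c|]; first by rewrite /complexify scalerDr !g_addr !rmorphD addrACA -opprD -mulrDr.
  split; last exact: complexify_scaler.
  move=> k a b; rewrite -complexify_scaler /complexify !g_balanced.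
  by rewrite [k *: ('i *: b)]scalerA [('i : R[i]) *: (k *: b)]scalerA [k * _]mulrC.
exists M%:C => a b; set z := complexify a b.
pose w := if z == 0 then 1 else `|z| / z.
have wz : complexify a (w *: b) = `|z|.
  by rewrite complexify_scaler /w -/z; case: eqP => [->|/eqP z0]; rewrite ?normr0 ?mulr0 ?mulfVK.
have w1 : re_norm w = 1.
  apply: complexI; rewrite -re_normE /w; case: eqP => [_|/eqP z0]; first by rewrite normr1.
  by rewrite normrM normfV normr_id mulfV ?normr_eq0.
have := g_dom (t := [:: (a, w *: b)]) (t' := [:: (a, w *: b)]) (fun _ _ => erefl).
rewrite big_seq1 /rcost big_seq1 re_normZ w1 mul1r /= => g_le.
rewrite !re_normE -!rmorphM /= lecR -mulrA (le_trans _ g_le) //.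
by rewrite /re_norm -wz /complexify; simpc.
Qed.

End Complexify.

Section BilinearExtension.
Variables (R : realType) (V : normedModType R[i]) (I : set V).
Variables (G : V -> V -> R[i]) (C lam : R[i]).
Hypotheses (I_sub : subspace I)
  (G_addl : forall u1 u2 w, I w -> G (u1 + u2) w = G u1 w + G u2 w)
  (G_scalel : forall k u w, I w -> G (k *: u) w = k * G u w)
  (G_addr : forall u w1 w2, I w1 -> I w2 -> G u (w1 + w2) = G u w1 + G u w2)
  (G_scaler : forall k u w, I w -> G u (k *: w) = k * G u w)
  (G_bound : forall u w, I w -> `|G u w| <= C * `|u| * `|w|).
Hypotheses (lam_ge1 : 1 <= lam)
  (lam_resp : forall s : seq (V * V), (forall p, p \in s -> I p.2) ->
     forall y, pi_costs setT s y -> forall eps : R[i], 0 < eps ->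
     exists x, pi_costs I s x /\ x <= lam * y + eps).

Lemma sum_eq_of_tensor_eq (s t : seq (V * V)) :
  (forall p, p \in s -> I p.2) -> (forall p, p \in t -> I p.2) ->
  tensor_eq s t -> \sum_(p <- s) G p.1 p.2 = \sum_(p <- t) G p.1 p.2.
Proof.
(* through a linear projection onto I, G becomes a bilinear form on V x V *)
have [P [P_lin PI P_id]] := ex_linear_projection I_sub.
have P_add v1 v2 : P (v1 + v2) = P v1 + P v2 by rewrite -[v1]scale1r P_lin !scale1r.
have P_scale k v : P (k *: v) = k *: P v.
  by rewrite -[k *: v]addr0 P_lin (P_id 0 (subspace0 I_sub)) addr0.
have GP_bilinear : bilinear_form (fun u v => G u (P v)).
  split; first by move=> *; exact: G_addl.
  split; first by move=> u v1 v2; rewrite P_add G_addr.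
  by split=> k u v; rewrite ?P_scale ?G_scalel ?G_scaler.
move=> sI tI st; transitivity (\sum_(p <- s) G p.1 (P p.2)).
  by apply: eq_big_seq => p /sI Ip; rewrite P_id.
by rewrite (st _ GP_bilinear); apply: eq_big_seq => p /tI Ip; rewrite P_id.
Qed.

Lemma norm_sum_le (s t : seq (V * V)) : (forall p, p \in s -> I p.2) ->
  tensor_eq s t -> `|\sum_(p <- s) G p.1 p.2| <= `|C| * (lam * rep_cost t).
Proof.
move=> sI st; apply: (ler_addM_gt0 (normr_ge0 C)) => e e0.
have [|_ [[t' [t'I [t's ->]]] le_t']] := lam_resp sI (y := rep_cost t) _ e0.
  by exists t; split=> //; split=> //; exact: tensor_eq_sym.
rewrite -mulrDr (sum_eq_of_tensor_eq sI t'I (tensor_eq_sym t's)).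
apply: le_trans (ler_norm_sum _ _ _) (le_trans _ (ler_wpM2l (normr_ge0 C) le_t')).
rewrite /rep_cost mulr_sumr !big_seq; apply: ler_sum => p /t'I Ip.
apply: ler_normlM; rewrite ?mulr_ge0 // mulrA; exact: G_bound.
Qed.

Theorem bdd_bilinear_extension :
  exists F, bdd_bilinear F /\ forall u w, I w -> F u w = G u w.
Proof.
pose G0 : set ((V * V) * R) := [set p | I p.1.2 /\ p.2 = complex.Re (G p.1.1 p.1.2)].
have G0_hom : homogeneous_graph G0.
  move=> u v y r [/= Iv ->]; split=> /=; first exact: subspaceZ.
  by rewrite G_scaler // Re_realM.
have G0_dom : dominated_graph (re_norm C * re_norm lam) G0.
  move=> s sG0 t st.
  have sI p : p \in map fst s -> I p.2 by case/mapP=> q /sG0[Iq _] ->.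
  have -> : \sum_(p <- s) p.2 = complex.Re (\sum_(p <- map fst s) G p.1 p.2).
    by rewrite Re_sum big_map; apply: eq_big_seq => p /sG0[_ ->].
  apply: le_trans (Re_le_re_norm _) _.
  have := norm_sum_le sI st.
  have lamE : lam = (re_norm lam)%:C by rewrite -re_normE ger0_norm // (le_trans ler01).
  by rewrite {1}lamE rep_costE !re_normE -!rmorphM /= lecR mulrA.
have [g [gG0 g_hom g_dom]] := dominated_extension G0_hom G0_dom.
exists (complexify g); split; first exact: complexify_bdd g_hom g_dom.
move=> u w Iw; rewrite /complexify (gG0 _ (complex.Re (G u w))) //.
rewrite (gG0 _ (complex.Re (G u ('i *: w)))); last by split=> //=; exact: subspaceZ.
by rewrite G_scaler //; case: (G u w) => a b; simpc.
Qed.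

End BilinearExtension.

Section BoundedBilinear.
Variables (R : realType) (V : normedModType R[i]) (mul : V -> V -> V).
Hypothesis mul_banach : banach_algebra_mul mul.
Implicit Types F G : V -> V -> R[i].

Lemma bdd_bilinear_nonneg F : bdd_bilinear F ->
  exists2 M, 0 <= M & forall a b, `|F a b| <= M * `|a| * `|b|.
Proof.
move=> [_ [M F_le]]; exists `|M| => // a b; rewrite -mulrA.
by apply: ler_normlM; rewrite ?mulr_ge0 // mulrA.
Qed.

Lemma bdd_bilinearD F G : bdd_bilinear F -> bdd_bilinear G ->
  bdd_bilinear (fun x y => F x y + G x y).
Proof.
move=> bF bG; have [[FDl [FDr [FZl FZr]]] _] := bF; have [[GDl [GDr [GZl GZr]]] _] := bG.
have [M M0 F_le] := bdd_bilinear_nonneg bF; have [N N0 G_le] := bdd_bilinear_nonneg bG.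
split; last by exists (M + N) => a b; rewrite !mulrDl (le_trans (ler_normD _ _)) ?lerD.
split; first by move=> a b c; rewrite FDl GDl addrACA.
split; first by move=> a b c; rewrite FDr GDr addrACA.
by split=> k a b; rewrite ?FZl ?GZl ?FZr ?GZr mulrDr.
Qed.

Lemma bdd_bilinearZ k F : bdd_bilinear F -> bdd_bilinear (fun x y => k * F x y).
Proof.
move=> bF; have [[FDl [FDr [FZl FZr]]] _] := bF; have [M M0 F_le] := bdd_bilinear_nonneg bF.
split; last first.
  by exists (`|k| * M) => a b; rewrite normrM -!mulrA; apply: ler_wpM2l; rewrite ?mulrA.
split; first by move=> a b c; rewrite FDl mulrDr.
split; first by move=> a b c; rewrite FDr mulrDr.
by split=> l a b; rewrite ?FZl ?FZr mulrCA.
Qed.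

Lemma bdd_bilinear_mulr F c :
  bdd_bilinear F -> bdd_bilinear (fun x y => F x (mul y c)).
Proof.
move=> bF; have [_ [mDl [_ [mZl [_ mul_le]]]]] := mul_banach.
have [[FDl [FDr [FZl FZr]]] _] := bF; have [M M0 F_le] := bdd_bilinear_nonneg bF.
split.
  by split=> [a b d|]; [|split=> [a b d|]; [|split=> l a b]];
    rewrite ?mDl ?mZl ?FDl ?FDr ?FZl ?FZr.
exists (M * `|c|) => a b; apply: le_trans (F_le _ _) _.
rewrite -!mulrA; apply: ler_wpM2l => //; rewrite [`|c| * _]mulrC -mulrA.
by apply: ler_wpM2l => //; exact: mul_le.
Qed.

Lemma bdd_bilinear_mull F c :
  bdd_bilinear F -> bdd_bilinear (fun x y => F (mul c x) y).
Proof.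
move=> bF; have [_ [_ [mDr [_ [mZr mul_le]]]]] := mul_banach.
have [[FDl [FDr [FZl FZr]]] _] := bF; have [M M0 F_le] := bdd_bilinear_nonneg bF.
split.
  by split=> [a b d|]; [|split=> [a b d|]; [|split=> l a b]];
    rewrite ?mDr ?mZr ?FDl ?FDr ?FZl ?FZr.
exists (M * `|c|) => a b; apply: le_trans (F_le _ _) _.
apply: ler_wpM2r => //; rewrite -mulrA; apply: ler_wpM2l => //; exact: mul_le.
Qed.

End BoundedBilinear.

Section InnerDerivation.
Variables (R : realType) (V : normedModType R[i]) (mul : V -> V -> V).
Variable rho : (V -> V -> R[i]) -> V -> R[i].
Hypotheses (mul_banach : banach_algebra_mul mul)
  (rho_bdd : forall F, bdd_bilinear F -> bdd_functional_on setT (rho F))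
  (rho_add : forall F G, bdd_bilinear F -> bdd_bilinear G -> forall a,
     rho (fun x y => F x y + G x y) a = rho F a + rho G a)
  (rho_scale : forall k F, bdd_bilinear F -> forall a,
     rho (fun x y => k * F x y) a = k * rho F a)
  (rho_mulr : forall c F, bdd_bilinear F -> forall a,
     rho (fun x y => F x (mul y c)) a = rho F (mul a c))
  (rho_mull : forall c F, bdd_bilinear F -> forall a,
     rho (fun x y => F (mul c x) y) a = rho F (mul c a))
  (rho_Delta : forall phi, bdd_functional_on setT phi -> forall a,
     rho (fun x y => phi (mul x y)) a = phi a).
Variables (I : set V) (D F : V -> V -> R[i]).
Hypotheses (I_sub : subspace I) (I_mul : forall a x, I x -> I (mul a x) /\ I (mul x a))
  (D_der : derivation_into_dual mul I D)
  (F_bdd : bdd_bilinear F) (F_ext : forall u w, I w -> F u w = D u w).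

(* H_a of the proof idea, written with -1 * _ to fit rho_scale *)
Definition commutator_form a (u v : V) : R[i] :=
  F (mul a u) v + -1 * F u (mul v a).

Let F_mull a := bdd_bilinear_mull mul_banach a F_bdd.
Let F_mulr a := bdd_bilinear_mulr mul_banach a F_bdd.

Lemma commutator_form_bdd a : bdd_bilinear (commutator_form a).
Proof. exact: bdd_bilinearD (F_mull a) (bdd_bilinearZ (-1) (F_mulr a)). Qed.

Lemma rho_commutator_form a x :
  rho (commutator_form a) x = rho F (mul a x) - rho F (mul x a).
Proof.
rewrite rho_add ?rho_scale ?rho_mull ?rho_mulr ?mulN1r //; last exact: bdd_bilinearZ.
Qed.

Lemma rho_commutator_form_mul a y x :
  I x -> rho (commutator_form a) (mul y x) = D a (mul y x).
Proof.
move=> Ix; have [mul_assoc [mDl [_ [mZl [_ mul_le]]]]] := mul_banach.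
have [D_lin [_ [_ [_ D_mul]]]] := D_der; have [D_add [D_scale [C C_le]]] := D_lin a.
have Imx z : I (mul z x) by have [] := I_mul z Ix.
pose psi z := D a (mul z x).
have psi_bdd : bdd_functional_on setT psi.
  split; first by move=> z1 z2 _ _; rewrite /psi mDl D_add.
  split; first by move=> k z _; rewrite /psi mZl D_scale.
  exists (`|C| * `|x|) => z _; rewrite /psi mulrAC -mulrA.
  apply: le_trans (ler_normlM _ _ (C_le _ (Imx z))) _; rewrite ?normr_ge0 //.
  by apply: ler_wpM2l => //; exact: mul_le.
rewrite -rho_mulr; last exact: commutator_form_bdd.
rewrite -[RHS](rho_Delta psi_bdd); congr rho; apply: funext => u; apply: funext => v.
have [_ Ivxa] := I_mul a (Imx v).
rewrite /commutator_form /psi !F_ext ?Imx //.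
transitivity (D a (mul u (mul v x))); last by rewrite mul_assoc.
rewrite (_ : D (mul a u) _ = D u (mul (mul v x) a) + D a (mul u (mul v x))); last exact: D_mul.
by rewrite mulN1r addrAC subrr add0r.
Qed.

Hypothesis mul_approx : has_left_approx_identity mul.

Lemma D_eq_commutator_form a x : I x -> D a x = rho (commutator_form a) x.
Proof.
move=> Ix; have [_ [_ [Ch Ch_le]]] := rho_bdd (commutator_form_bdd a).
have [D_lin [_ [_ [[CD D_le] _]]]] := D_der.
pose h z := rho (commutator_form a) z - D a z.
suff : h x = 0 by move/eqP; rewrite subr_eq0 => /eqP.
apply: (approx_eq0 (M := `|Ch| + `|CD| * `|a|) I_sub) => //.
- move=> y Iy; rewrite /h !(bdd_functional_onB I_sub (D_lin a)) //.
  rewrite !(bdd_functional_onB (@subspaceT _ V) (rho_bdd (commutator_form_bdd a))) //.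
  ring.
- move=> z Iz; rewrite mulrDl -mulrA; apply: le_trans (ler_normB _ _) (lerD _ _).
    by apply: ler_normlM; rewrite ?normr_ge0 //; exact: Ch_le.
  by apply: ler_normlM; rewrite ?mulr_ge0 // mulrA; exact: D_le.
- move=> e e0; have [Idx [le [u [_ [le_refl [_ [_ u_approx]]]]]]] := mul_approx.
  have [d0 d0_le] := u_approx x e e0.
  exists (mul (u d0) x); last by rewrite distrC; exact: d0_le.
  by split; [have [] := I_mul (u d0) Ix|rewrite /h rho_commutator_form_mul // subrr].
Qed.

Theorem derivation_is_inner : inner_into_dual mul I D.
Proof.
have [f_add [f_scale [Cf Cf_le]]] := rho_bdd (bdd_bilinearZ (-1) F_bdd).
exists (rho (fun u v => -1 * F u v)); split.
  split=> [x y _ _|]; first exact: f_add.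
  by split=> [k x _|]; [exact: f_scale|exists Cf => x _; exact: Cf_le].
move=> a x Ix; rewrite !rho_scale // D_eq_commutator_form // rho_commutator_form.
by rewrite !mulN1r opprK addrC.
Qed.

End InnerDerivation.

Theorem corollary4p2 (R : realType) (V : completeNormedModType R[i])
    (mul : V -> V -> V) :
  banach_algebra_mul mul ->
  biflat mul ->
  has_left_approx_identity mul ->
  (forall I : set V, closed_ideal mul I -> respects_isomorphically I) ->
  ideally_amenable mul.
Proof.
move=> mul_banach [rho [rho_bdd [rho_add [rho_scale [_ [rho_mulr [rho_mull rho_Delta]]]]]]].
move=> mul_approx resp I I_ideal D D_der.
have I_sub := closed_ideal_subspace I_ideal.
have I_mul : forall a x, I x -> I (mul a x) /\ I (mul x a) by case: I_ideal => [_ [_ [_ [_]]]].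
have [lam [lam_ge1 lam_resp]] := resp I I_ideal.
have [D_lin [D_addl [D_scalel [[C D_le] _]]]] := D_der.
have D_addr u w1 w2 : I w1 -> I w2 -> D u (w1 + w2) = D u w1 + D u w2.
  by have [D_add _] := D_lin u; exact: D_add.
have D_scaler k u w : I w -> D u (k *: w) = k * D u w.
  by have [_ [D_scale _]] := D_lin u; exact: D_scale.
have [F [F_bdd F_ext]] :=
  bdd_bilinear_extension I_sub D_addl D_scalel D_addr D_scaler D_le lam_ge1 lam_resp.
exact: (derivation_is_inner mul_banach rho_bdd rho_add rho_scale rho_mulr rho_mull rho_Delta
  I_sub I_mul D_der F_bdd F_ext mul_approx).
Qed.
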